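(* Let $\boldsymbol k$ be an algebraically closed field of characteristic $p>0$, and let $C$ be a finite cyclic group whose order is a positive power of $p$ (generated by a nonidentity unipotent element). For every finite-dimensional $\boldsymbol kC$-modules $P$ and $Q$, $$|P\otimes Q|\leqslant |P\otimes I^{\oplus\dim_{\boldsymbol k}Q}|,$$ where $I$ is the one-dimensional trivial $\boldsymbol kC$-module and $C$ acts on tensor products diagonally.
   Context: For a finite-dimensional $\boldsymbol kC$-module $N$, $|N|$ denotes the number of indecomposable summands in a decomposition of $N$ as a direct sum of indecomposable $\boldsymbol kC$-submodules (well defined by the Krull–Schmidt theorem). $I^{\oplus r}$ is the direct sum of $r$ copies of $I$. *)

From HB Require Import structures.
From mathcomp Require Import all_boot all_order all_algebra all_fingroup all_solvable.
From mathcomp Require Import mxrepresentation.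
From mathcomp Require Import mxtens.
Set Implicit Arguments. Unset Strict Implicit. Unset Printing Implicit Defensive.
Import GRing.Theory.
Local Open Scope ring_scope.

(* Finite-dimensional kG-modules are represented as matrix representations
   [mx_representation F G n] (row-vector convention of mxrepresentation.v). *)

Lemma tensmx11 (R : comPzRingType) (m n : nat) :
  (1%:M : 'M[R]_m) *t (1%:M : 'M[R]_n) = 1%:M.
Proof.
apply/matrixP=> i j.
case: (mxtens_indexP i)=> i0 i1; case: (mxtens_indexP j)=> j0 j1.
rewrite tensmxE !mxE /= (inj_eq (can_inj (@mxtens_indexK m n))) xpair_eqE.
by case: (i0 == j0); case: (i1 == j1); rewrite ?mulr1 ?mulr0 ?mul0r.
Qed.

Section Tens.
Variables (F : fieldType) (gT : finGroupType) (G : {group gT}).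

Lemma tens_mx_repr m n (rP : mx_representation F G m)
    (rQ : mx_representation F G n) :
  mx_repr G (fun x => rP x *t rQ x).
Proof.
split; first by rewrite !repr_mx1 tensmx11.
by move=> x y Gx Gy /=; rewrite tensmx_mul !repr_mxM.
Qed.

Definition tens_repr m n (rP : mx_representation F G m)
    (rQ : mx_representation F G n) : mx_representation F G (m * n) :=
  MxRepresentation (tens_mx_repr rP rQ).

Lemma triv_mx_repr n : mx_repr G (fun _ : gT => (1%:M : 'M[F]_n)).
Proof. by split=> // x y _ _; rewrite mulmx1. Qed.

Definition triv_repr n : mx_representation F G n :=
  MxRepresentation (triv_mx_repr n).

Definition mx_indecomposable n (rG : mx_representation F G n) (U : 'M[F]_n) :=
  [/\ mxmodule rG U, U != 0 &
      forall U1 U2 : 'M[F]_n, mxmodule rG U1 -> mxmodule rG U2 ->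
        (U1 + U2 :=: U)%MS -> mxdirect (U1 + U2) -> U1 = 0 \/ U2 = 0].

Definition indec_decomposition n (rG : mx_representation F G n) (r : nat) :=
  exists W : 'I_r -> 'M[F]_n,
    [/\ forall i, mx_indecomposable rG (W i),
        (\sum_i W i :=: 1%:M)%MS & mxdirect (\sum_i W i)].
End Tens.

(* Let g generate C and, for a representation rho, put N := rho g - 1.  As C
   is a p-group in characteristic p, N is nilpotent, and the submodules are
   exactly the N-stable subspaces.  Every N-stable indecomposable subspace has a
   one-dimensional fixed space: a vector v of maximal height k spans, with its
   N-translates, a cyclic summand, complemented by the common kernel of the
   functionals x |-> phi (x N^j), j <= k, for a coordinate phi with
   phi (v N^k) <> 0.  Hence any decomposition into indecomposables has exactly
   dim ker N summands, and with X, Y the matrices of g on P and Q the claim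
   becomes n * rank (X - 1) <= rank (X (x) Y - 1).  Up to swapping the tensor
   factors, this follows by induction on n: conjugating Y to lower block
   triangular form with a fixed vector first makes Y (x) X - 1 block lower
   triangular with diagonal blocks X - 1 and Y' (x) X - 1. *)

From HB Require Import structures.
From mathcomp Require Import all_boot all_order all_algebra all_fingroup all_solvable.
From mathcomp Require Import pgroup cyclic mxrepresentation mxtens zify.
Set Implicit Arguments. Unset Strict Implicit. Unset Printing Implicit Defensive.
Import GRing.Theory.
Local Open Scope ring_scope.

Section NilpotentStable.
Variables (F : fieldType) (d : nat) (N : 'M[F]_d).

Lemma stablemxX a (W : 'M_(a, d)) k :
  (W *m N <= W)%MS -> (W *m N ^+ k <= W)%MS.
Proof.
move=> sWN; elim: k => [|k IHk]; first by rewrite expr0 mulmx1.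
by rewrite exprSr mulmxA (submx_trans (submxMr N IHk)).
Qed.

Lemma mulmx_powN_eq0 a (W : 'M_(a, d)) k t :
  W *m N ^+ k = 0 -> (k <= t)%N -> W *m N ^+ t = 0.
Proof. by move=> WNk /subnKC <-; rewrite exprD mulmxA WNk mul0mx. Qed.

Lemma nilpotent_height a (W : 'M_(a, d)) e :
  W != 0 -> W *m N ^+ e = 0 ->
  exists k, W *m N ^+ k != 0 /\ W *m N ^+ k.+1 = 0.
Proof.
move=> nzW WNe; have exP : exists j, W *m N ^+ j == 0 by exists e; apply/eqP.
case: (ex_minnP exP) => [[|k] /eqP WNk min_k].
  by move: WNk; rewrite expr0 mulmx1 => W0; rewrite W0 eqxx in nzW.
by exists k; split=> //; apply/negP => /min_k; rewrite ltnn.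
Qed.

Lemma stable_capmx_kermx_neq0 a (W : 'M_(a, d)) e :
  N ^+ e = 0 -> (W *m N <= W)%MS -> W != 0 -> (W :&: kermx N)%MS != 0.
Proof.
move=> Ne0 sWN nzW; have [|k [nzWNk WNk1]] := nilpotent_height nzW (e := e).
  by rewrite Ne0 mulmx0.
apply: contraNneq nzWNk => capW0; rewrite -submx0 -capW0.
rewrite sub_capmx stablemxX //; apply/sub_kermxP.
by rewrite -mulmxA -[_ *m N]/(_ * N) -exprSr.
Qed.

Lemma mxdirect_sumsS r (W V : 'I_r -> 'M[F]_d) :
  mxdirect (\sum_i W i) -> (forall i, V i <= W i)%MS -> mxdirect (\sum_i V i).
Proof.
move=> /mxdirect_sumsP dW sVW; apply/mxdirect_sumsP => i _; apply/eqP.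
rewrite -submx0 -[X in (_ <= X)%MS](dW i isT).
by apply: capmxS; last apply: sumsmxS => j _; apply: sVW.
Qed.

Lemma mxdirect_stable_kermx_rank r (W : 'I_r -> 'M[F]_d) :
  (\sum_i W i :=: 1%:M)%MS -> mxdirect (\sum_i W i) ->
  (forall i, W i *m N <= W i)%MS ->
  (\sum_i \rank (W i :&: kermx N))%N = \rank (kermx N).
Proof.
move=> defW dW sWN.
have rank_sum V : (forall i, V i <= W i)%MS ->
    \rank (\sum_i V i) = (\sum_i \rank (V i))%N.
  by move=> sVW; apply/mxdirectP; apply: mxdirect_sumsS sVW.
have rW : (\sum_i \rank (W i))%N = d.
  by rewrite -rank_sum // defW mxrank1.
have rWN : (\sum_i \rank (W i *m N))%N = \rank N.
  by rewrite -rank_sum // -(sumsmxMr _ _ _).1 (eqmxMr N defW).1 mul1mx.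
have : (\sum_i \rank (W i :&: kermx N) + \sum_i \rank (W i *m N))%N =
       (\sum_i \rank (W i))%N.
  by rewrite -big_split; apply: eq_bigr => i _; rewrite /= addnC mxrank_mul_ker.
by rewrite mxrank_ker rW rWN; lia.
Qed.

End NilpotentStable.

Section CycleMx.
Variables (F : fieldType) (d : nat) (N : 'M[F]_d) (v : 'rV[F]_d) (k : nat).
Variable j0 : 'I_d.
Hypothesis vNk1 : v *m N ^+ k.+1 = 0.
Hypothesis vNk_j0 : (v *m N ^+ k) 0 j0 != 0.

(* [cycle_mx] has rows v N^k, ..., v N, v and [x *m orbit_coord_mx] lists the
   j0-th coordinates of x, x N, ..., x N^k.  In this order their product is
   triangular with diagonal entries (v N^k)_j0, so [kermx orbit_coord_mx]
   complements the cyclic subspace. *)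
Definition cycle_mx := \matrix_(i < k.+1) (v *m N ^+ (k - i)).

Definition orbit_coord_mx := \matrix_(a < d, j < k.+1) (N ^+ j) a j0.

Lemma mul_orbit_coord_mxE m (x : 'M_(m, d)) i j :
  (x *m orbit_coord_mx) i j = (x *m N ^+ j) i j0.
Proof. by rewrite !mxE; apply: eq_bigr => a _; rewrite mxE. Qed.

Lemma cycle_orbit_coord_mxE i j :
  (cycle_mx *m orbit_coord_mx) i j = (v *m N ^+ (k - i + j)) 0 j0.
Proof.
rewrite mul_orbit_coord_mxE.
have -> : (cycle_mx *m N ^+ j) i j0 = row i (cycle_mx *m N ^+ j) 0 j0.
  by rewrite [RHS]mxE.
rewrite row_mul rowK -mulmxA.
by rewrite -[N ^+ (k - i) *m N ^+ j]/(N ^+ (k - i) * N ^+ j) -exprD.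
Qed.

Lemma cycle_orbit_coord_unit : cycle_mx *m orbit_coord_mx \in unitmx.
Proof.
rewrite unitmxE unitfE det_trig.
  rewrite prodf_seq_neq0; apply/allP => i _; apply/implyP => _.
  by rewrite cycle_orbit_coord_mxE addnC subnKC // -ltnS.
apply/forallP => i; apply/forallP => j; apply/implyP => lt_ij.
rewrite cycle_orbit_coord_mxE (mulmx_powN_eq0 vNk1) ?mxE //.
by have := ltn_ord i; lia.
Qed.

Lemma rank_cycle_mx : \rank cycle_mx = k.+1.
Proof.
apply/eqP; rewrite eqn_leq rank_leq_row.
by rewrite -{1}(mxrank_unit cycle_orbit_coord_unit) mxrankM_maxl.
Qed.

Lemma cycle_mx_cap_kermx_coord : (cycle_mx :&: kermx orbit_coord_mx)%MS = 0.
Proof.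
apply/eqP; rewrite -mxrank_eq0; have := mxrank_mul_ker cycle_mx orbit_coord_mx.
by rewrite (mxrank_unit cycle_orbit_coord_unit) rank_cycle_mx; lia.
Qed.

Lemma stable_cycle_mx : (cycle_mx *m N <= cycle_mx)%MS.
Proof.
apply/row_subP => i; rewrite row_mul rowK -mulmxA.
rewrite -[N ^+ (k - i) *m N]/(N ^+ (k - i) * N) -exprSr.
case: i => [[|i] lt_ik] /=; first by rewrite subn0 vNk1 sub0mx.
rewrite -subSn 1?subSS; last by rewrite -ltnS.
by rewrite -(rowK (fun i : 'I_k.+1 => v *m N ^+ (k - i)) (Ordinal (ltnW lt_ik))) row_sub.
Qed.

Lemma stable_cap_kermx_coord m (W : 'M_(m, d)) :
  W *m N ^+ k.+1 = 0 -> (W *m N <= W)%MS ->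
  ((W :&: kermx orbit_coord_mx) *m N <= W :&: kermx orbit_coord_mx)%MS.
Proof.
move=> WNk1 sWN; set U := (W :&: _)%MS; have sUW : (U <= W)%MS := capmxSl _ _.
rewrite sub_capmx (submx_trans (submxMr N sUW) sWN) /=.
apply/sub_kermxP/matrixP => a j.
rewrite mul_orbit_coord_mxE [RHS]mxE -mulmxA -[N *m _]/(N * _) -exprS.
case: (ltnP j.+1 k.+1) => [lt_jk | le_kj].
  rewrite -(mul_orbit_coord_mxE _ _ (Ordinal lt_jk)).
  by have /sub_kermxP-> := capmxSr W (kermx orbit_coord_mx); rewrite mxE.
have /submxP[y ->] := sUW.
by rewrite -mulmxA (mulmx_powN_eq0 WNk1 le_kj) mulmx0 mxE.
Qed.

(* On ker N only the zeroth orbit coordinate survives, and [orbit_coord_mx] is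
   injective on the cyclic subspace. *)
Lemma rank_cycle_mx_cap_kermx : (\rank (cycle_mx :&: kermx N) <= 1)%N.
Proof.
set Z := (cycle_mx :&: kermx N)%MS.
have ZN : Z *m N = 0 by apply/sub_kermxP; apply: capmxSr.
have rZ : \rank Z = \rank (Z *m orbit_coord_mx).
  have := mxrank_mul_ker Z orbit_coord_mx.
  suff -> : (Z :&: kermx orbit_coord_mx)%MS = 0 by rewrite mxrank0 addn0.
  apply/eqP; rewrite -submx0 -cycle_mx_cap_kermx_coord.
  by apply: capmxS => //; apply: capmxSl.
rewrite rZ; have -> : Z *m orbit_coord_mx = Z *m orbit_coord_mx *m delta_mx 0 0.
  apply/matrixP => a j; rewrite [RHS]mxE (bigD1 0) //= big1 ?addr0; last first.
    by move=> b nz_b; rewrite [delta_mx _ _ _ _]mxE (negbTE nz_b) mulr0.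
  rewrite [delta_mx _ _ _ _]mxE eqxx /=.
  case: (eqVneq j 0) => [->|nz_j]; first by rewrite mulr1.
  rewrite mulr0 mul_orbit_coord_mxE.
  case: j nz_j => [[|j] ?] //= _.
  by rewrite exprS mulmxA ZN mul0mx mxE.
by rewrite (leq_trans (mxrankM_maxr _ _)) ?mxrank_delta.
Qed.

Lemma cycle_mx_sub m (W : 'M_(m, d)) :
  (W *m N <= W)%MS -> (v <= W)%MS -> (cycle_mx <= W)%MS.
Proof.
move=> sWN sVW; apply/row_subP => i; rewrite rowK.
exact: submx_trans (submxMr _ sVW) (stablemxX _ sWN).
Qed.

Lemma mxdirect_cycle_cap_kermx_coord m (W : 'M_(m, d)) :
  mxdirect (<<cycle_mx>> + (W :&: kermx orbit_coord_mx))%MS.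
Proof.
apply/mxdirect_addsP/eqP; rewrite -submx0 -cycle_mx_cap_kermx_coord.
by apply: capmxS; rewrite ?genmxE ?capmxSr.
Qed.

Lemma addsmx_cycle_cap_kermx_coord m (W : 'M_(m, d)) :
  (W *m N <= W)%MS -> (v <= W)%MS ->
  (<<cycle_mx>> + (W :&: kermx orbit_coord_mx) :=: W)%MS.
Proof.
move=> sWN sVW.
have sUW : (<<cycle_mx>> + (W :&: kermx orbit_coord_mx) <= W)%MS.
  by rewrite addsmx_sub genmxE cycle_mx_sub // capmxSl.
apply/eqmxP; rewrite -(geq_leqif (mxrank_leqif_sup sUW)).
move/mxdirectP: (mxdirect_cycle_cap_kermx_coord W) => /= ->.
rewrite mxrank_gen rank_cycle_mx.
have := mxrank_mul_ker W orbit_coord_mx; have := rank_leq_col (W *m orbit_coord_mx).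
lia.
Qed.

End CycleMx.

Lemma indecomposable_kermx_rank (F : fieldType) d (N W : 'M[F]_d) e :
  N ^+ e = 0 -> (W *m N <= W)%MS ->
  (forall U1 U2 : 'M_d, (U1 *m N <= U1)%MS -> (U2 *m N <= U2)%MS ->
     (U1 + U2 :=: W)%MS -> mxdirect (U1 + U2) -> U1 = 0 \/ U2 = 0) ->
  (\rank (W :&: kermx N) <= 1)%N.
Proof.
move=> Ne0 sWN indW; have [->|nzW] := eqVneq W 0.
  by rewrite (_ : (0 :&: _)%MS = 0) ?mxrank0 //; apply/eqP; rewrite -submx0 capmxSl.
have [|k [nzWNk WNk1]] := nilpotent_height (N := N) nzW (e := e); first by rewrite Ne0 mulmx0.
have [_ /submxP[x ->] nz_xWNk] := rowV0Pn nzWNk; rewrite mulmxA in nz_xWNk.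
set v := x *m W; have sVW : (v <= W)%MS := submxMl x W.
have vNk1 : v *m N ^+ k.+1 = 0 by rewrite -mulmxA WNk1 mulmx0.
have [j0 vNk_j0] : exists j0, (v *m N ^+ k) 0 j0 != 0.
  apply/existsP; rewrite -negb_forall; apply: contra nz_xWNk => /forallP vNk0.
  by apply/eqP; apply/rowP => j; rewrite [RHS]mxE; apply/eqP/vNk0.
have sCN : (<<cycle_mx N v k>> *m N <= <<cycle_mx N v k>>)%MS.
  by rewrite (eqmxMr N (genmxE _)) genmxE stable_cycle_mx.
have := indW _ _ sCN (stable_cap_kermx_coord j0 WNk1 sWN)
  (addsmx_cycle_cap_kermx_coord vNk1 vNk_j0 sWN sVW)
  (mxdirect_cycle_cap_kermx_coord vNk1 vNk_j0 W).
case=> [/eqP | U0].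
  by rewrite -mxrank_eq0 mxrank_gen (rank_cycle_mx vNk1 vNk_j0).
have := addsmx_cycle_cap_kermx_coord vNk1 vNk_j0 sWN sVW.
rewrite U0 => /(eqmx_trans (eqmx_sym (addsmx0 _ _))).
move=> /(eqmx_trans (eqmx_sym (genmxE _))) defW.
by rewrite -(cap_eqmx defW (eqmx_refl _)).1 (rank_cycle_mx_cap_kermx vNk1 vNk_j0).
Qed.

Section TensorRank.
Variable F : fieldType.

Lemma mxrank_castmx m n m' n' (e : (m = m') * (n = n')) (A : 'M[F]_(m, n)) :
  \rank (castmx e A) = \rank A.
Proof. by case: e => em en; case: m' / em; case: n' / en; rewrite castmx_id. Qed.

Lemma castmxB m n m' n' (e : (m = m') * (n = n')) (A B : 'M[F]_(m, n)) :
  castmx e (A - B) = castmx e A - castmx e B.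
Proof. by case: e => em en; case: m' / em; case: n' / en; rewrite !castmx_id. Qed.

Lemma mxrankMM_max m n p q (P : 'M[F]_(m, n)) (A : 'M_(n, p)) (Q : 'M_(p, q)) :
  (\rank (P *m A *m Q) <= \rank A)%N.
Proof. exact: leq_trans (mxrankM_maxl _ _) (mxrankM_maxr _ _). Qed.

Lemma tensmxBr m n p q (A : 'M[F]_(m, n)) (B C : 'M_(p, q)) :
  A *t (B - C) = A *t B - A *t C.
Proof. by apply/matrixP => i j; rewrite !mxE mulrBr. Qed.

Lemma mxrank_tens1mx n p q (A : 'M[F]_(p, q)) :
  \rank ((1%:M : 'M_n) *t A) = (n * \rank A)%N.
Proof.
elim: n => [|n IHn]; first by apply/eqP; rewrite -leqn0 rank_leq_row.
rewrite -add1n (scalar_mx_block 1 n (1 : F)) tens_block_mx mxrank_castmx !tens0mx.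
by rewrite rank_diag_block_mx tens_scalar_mx scale1r mxrank_castmx IHn mulSn.
Qed.

Definition tens_swap_index m n (a : 'I_(m * n)) : 'I_(n * m) :=
  mxtens_index ((mxtens_unindex a).2, (mxtens_unindex a).1).

Lemma tens_swap_indexK m n : cancel (@tens_swap_index m n) (@tens_swap_index n m).
Proof.
move=> a; rewrite /tens_swap_index mxtens_indexK -[RHS]mxtens_unindexK.
by case: (mxtens_unindex a).
Qed.

Definition tens_swap_mx m n : 'M[F]_(m * n, n * m) :=
  \matrix_(a, b) (tens_swap_index a == b)%:R.

Lemma mul_tens_swap_mx m n p (A : 'M[F]_(n * m, p)) a b :
  (tens_swap_mx m n *m A) a b = A (tens_swap_index a) b.
Proof.
rewrite mxE (bigD1 (tens_swap_index a)) //= big1 ?addr0; first by rewrite mxE eqxx mul1r.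
by move=> c /negbTE nac; rewrite mxE eq_sym nac mul0r.
Qed.

Lemma mulmx_tens_swap_mx m n p (A : 'M[F]_(p, m * n)) a b :
  (A *m tens_swap_mx m n) a b = A a (tens_swap_index b).
Proof.
rewrite mxE (bigD1 (tens_swap_index b)) //= big1 ?addr0.
  by rewrite mxE tens_swap_indexK eqxx mulr1.
move=> c nbc; rewrite mxE (_ : (_ == b) = false) ?mulr0 //.
by apply/negbTE; apply: contra nbc => /eqP <-; rewrite tens_swap_indexK.
Qed.

Lemma tens_swap_mxK m n : tens_swap_mx m n *m tens_swap_mx n m = 1%:M.
Proof.
by apply/matrixP => a b; rewrite mul_tens_swap_mx !mxE tens_swap_indexK.
Qed.

Lemma tens_swap_mxC m n (A : 'M[F]_m) (B : 'M[F]_n) :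
  tens_swap_mx m n *m (B *t A) = (A *t B) *m tens_swap_mx m n.
Proof.
apply/matrixP => a b; rewrite mul_tens_swap_mx mulmx_tens_swap_mx.
case: (mxtens_indexP a) => i0 i1; case: (mxtens_indexP b) => j0 j1.
by rewrite /tens_swap_index !mxtens_indexK /= !tensmxE mulrC.
Qed.

Lemma mxrank_tens_sub1_le m n (A : 'M[F]_m) (B : 'M[F]_n) :
  (\rank (A *t B - 1%:M)%R <= \rank (B *t A - 1%:M)%R)%N.
Proof.
suff -> : A *t B - 1%:M =
    tens_swap_mx m n *m (B *t A - 1%:M) *m tens_swap_mx n m by apply: mxrankMM_max.
by rewrite mulmxBr mulmxBl mulmx1 tens_swap_mxK tens_swap_mxC -mulmxA tens_swap_mxK mulmx1.
Qed.

Lemma mxrank_tens_sub1C m n (A : 'M[F]_m) (B : 'M[F]_n) :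
  \rank (A *t B - 1%:M) = \rank (B *t A - 1%:M).
Proof. by apply/eqP; rewrite eqn_leq !mxrank_tens_sub1_le. Qed.

Lemma mxrank_lower_block_mx m1 m2 n1 n2 (A : 'M[F]_(m1, n1)) (C : 'M_(m2, n1))
    (D : 'M_(m2, n2)) :
  (\rank A + \rank D <= \rank (block_mx A 0 C D))%N.
Proof.
set M := block_mx A 0 C D; pose P : 'M[F]_(n1 + n2, n2) := col_mx 0 1%:M.
have MP : M *m P = col_mx 0 D.
  by rewrite mul_block_col !mulmx0 !mulmx1 addr0 add0r.
have sAM : (row_mx A 0 <= M :&: kermx P)%MS.
  rewrite sub_capmx /M block_mxEv; apply/andP; split.
    by apply/submxP; exists (row_mx 1%:M 0); rewrite mul_row_col mul1mx mul0mx addr0.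
  by apply/sub_kermxP; rewrite mul_row_col mulmx0 mul0mx addr0.
have := mxrank_mul_ker M P; rewrite MP rank_col_0mx => <-.
by rewrite addnC leq_add2l (leq_trans _ (mxrankS sAM)) // rank_row_mx0.
Qed.

Lemma mxrank_tens_lower_block_sub1 m n (y : 'cV[F]_n) (X : 'M_n) (Y : 'M_m) :
  (\rank (Y - 1%:M)%R + \rank (X *t Y - 1%:M)%R <=
   \rank (block_mx 1%:M 0 y X *t Y - 1%:M)%R)%N.
Proof.
rewrite -{1}(tensmx11 F (1 + n) m) (scalar_mx_block 1 n (1 : F)).
rewrite !tens_block_mx -castmxB mxrank_castmx !tens0mx opp_block_mx add_block_mx.
rewrite !subr0 -tensmxBr tensmx11 (leq_trans _ (mxrank_lower_block_mx _ _ _)) //.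
by rewrite mxrank_tens1mx mul1n.
Qed.

Lemma lower_block_mx_expr m1 m2 (A : 'M[F]_m1) (C : 'M_(m2, m1)) (D : 'M_m2) j :
  exists C', block_mx A 0 C D ^+ j = block_mx (A ^+ j) 0 C' (D ^+ j).
Proof.
elim: j => [|j [C' IHj]]; first by exists 0; rewrite !expr0 -scalar_mx_block.
exists (C' *m A + D ^+ j *m C).
rewrite exprSr IHj -[_ * _]/(_ *m _) mulmx_block !mulmx0 !mul0mx !addr0 add0r.
by congr block_mx; apply: esym; apply: exprSr.
Qed.

Lemma conjmx_expr n (S A : 'M[F]_n) j : S \in unitmx ->
  (S *m A *m invmx S) ^+ j = S *m A ^+ j *m invmx S.
Proof.
move=> uS; elim: j => [|j IHj]; first by rewrite !expr0 mulmx1 mulmxV.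
rewrite exprS IHj -[_ * _]/(_ *m _) !mulmxA mulmxKV //.
by rewrite exprS -[A * _]/(A *m _) !mulmxA.
Qed.

Lemma fixed_row_similar_lower_block n (X : 'M[F]_(1 + n)) (u : 'rV_(1 + n)) :
  u != 0 -> u *m X = u ->
  exists S (y : 'cV_n) (X' : 'M_n),
    S \in unitmx /\ S *m X *m invmx S = block_mx 1%:M 0 y X'.
Proof.
move=> nz_u uX; have rkC : \rank u^C%MS = n by rewrite mxrank_compl rank_rV nz_u subn1.
set S := col_mx u (castmx (rkC, erefl) (row_base u^C%MS)).
have defS : (S :=: u + u^C)%MS.
  apply: eqmx_trans (eqmx_sym (addsmxE _ _)) _; apply: adds_eqmx => //.
  exact: eqmx_trans (eqmx_cast _ _) (eq_row_base _).
have uS : S \in unitmx.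
  by rewrite -row_full_unit; have := addsmx_compl_full u; rewrite /row_full defS.1.
set L := S *m X *m invmx S.
have uL : usubmx L = row_mx 1%:M 0.
  have uSE : usubmx S = u by rewrite col_mxKu.
  rewrite /L -!mul_usub_mx uSE uX -[u in u *m _]uSE mul_usub_mx mulmxV //.
  by rewrite (scalar_mx_block 1 n (1 : F)) block_mxEv col_mxKu.
exists S, (dlsubmx L), (drsubmx L); split=> //.
by rewrite -/L -{1}(submxK L) /ulsubmx /ursubmx uL row_mxKl row_mxKr.
Qed.

Lemma unipotent_tens_rank n m (X : 'M[F]_n) (Y : 'M_m) k :
  (X - 1%:M) ^+ k = 0 ->
  (n * \rank (Y - 1%:M)%R <= \rank (X *t Y - 1%:M)%R)%N.
Proof.
elim: n X => [|n IHn] X Xk; first by rewrite mul0n.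
have nz_ker : kermx (X - 1%:M) != 0.
  have nz1 : (1%:M : 'M[F]_n.+1) != 0 by rewrite -mxrank_eq0 mxrank1.
  apply: contraNneq (stable_capmx_kermx_neq0 Xk (submx1 _) nz1) => ->.
  by rewrite -submx0 capmxSr.
have nz_u := nz_ker; rewrite -nz_row_eq0 in nz_u.
have uX : nz_row (kermx (X - 1%:M)) *m X = nz_row (kermx (X - 1%:M)).
  apply/eqP; rewrite -subr_eq0 -{2}[nz_row _]mulmx1 -mulmxBr.
  exact/eqP/sub_kermxP/nz_row_sub.
have [S [y [X' [uS defL]]]] := fixed_row_similar_lower_block nz_u uX.
have X'k : (X' - 1%:M) ^+ k = 0.
  have : (S *m X *m invmx S - 1%:M) ^+ k = 0.
    have -> : S *m X *m invmx S - 1%:M = S *m (X - 1%:M) *m invmx S.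
      by rewrite mulmxBr mulmxBl mulmx1 mulmxV.
    by rewrite conjmx_expr // Xk mulmx0 mul0mx.
  rewrite defL (scalar_mx_block 1 n (1 : F)) opp_block_mx add_block_mx subrr !subr0.
  have [C' ->] := lower_block_mx_expr 0 y (X' - 1%:M) k.
  move=> /(congr1 drsubmx); rewrite block_mxKdr => ->.
  by apply/matrixP => i j; rewrite !mxE.
have simY : (\rank ((S *m X *m invmx S) *t Y - 1%:M)%R <= \rank (X *t Y - 1%:M)%R)%N.
  suff -> : (S *m X *m invmx S) *t Y - 1%:M =
      (S *t 1%:M) *m (X *t Y - 1%:M) *m (invmx S *t 1%:M) by apply: mxrankMM_max.
  rewrite mulmxBr mulmxBl mulmx1 !tensmx_mul mulmx1 mul1mx mulmxV //.
  by rewrite mulmx1 tensmx11.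
rewrite defL in simY; rewrite mulSn.
exact: leq_trans (leq_add (leqnn _) (IHn _ X'k))
  (leq_trans (mxrank_tens_lower_block_sub1 _ _ _) simY).
Qed.

End TensorRank.

Lemma subr1_expn_pchar (R : nzRingType) p (x : R) e :
  p \in [pchar R] -> (x - 1) ^+ (p ^ e) = x ^+ (p ^ e) - 1.
Proof.
move=> pR; elim: e => [|e IHe]; first by rewrite !expr1.
rewrite expnSr !exprM IHe.
have := pFrobenius_autB_comm pR (commr1 (x ^+ (p ^ e))).
by rewrite !pFrobenius_autE expr1n.
Qed.

Section CyclicPGroupRepr.
Variables (F : fieldType) (gT : finGroupType) (C : {group gT}) (g : gT).
Hypothesis defC : C :=: <[g]>%g.

Lemma cycle_gen_in : g \in C.
Proof. by rewrite defC cycle_id. Qed.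

Lemma repr_mx_expg d (rG : mx_representation F C d) i :
  rG (g ^+ i)%g = rG g ^+ i.
Proof.
elim: i => [|i IHi]; first by rewrite expg0 repr_mx1.
by rewrite expgS repr_mxM ?groupX ?cycle_gen_in // IHi exprS.
Qed.

Lemma mxmodule_cycleE d (rG : mx_representation F C d) (U : 'M_d) :
  mxmodule rG U = (U *m (rG g - 1%:M) <= U)%MS.
Proof.
rewrite mulmxBr mulmx1; apply/mxmoduleP/idP => [modU | sUN x].
  by rewrite addmx_sub ?eqmx_opp ?modU ?cycle_gen_in.
have sUg : (U *m rG g <= U)%MS by rewrite -[U *m _](subrK U) addmx_sub.
move=> Cx; have /cycleP[i ->] : x \in <[g]>%g by rewrite -defC.
rewrite repr_mx_expg.
by elim: i => [|i IHi]; rewrite ?expr0 ?mulmx1 // exprSr mulmxA (submx_trans (submxMr _ IHi)).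
Qed.

Variable p : nat.
Hypotheses (pF : p \in [pchar F]) (pC : (p.-group C)%g).

Lemma repr_mx_sub1_nilpotent d (rG : mx_representation F C d) :
  exists e, (rG g - 1%:M) ^+ e = 0.
Proof.
have [e cardC] := p_natP pC; exists (p ^ e)%N.
case: d rG => [|d] rG; first by rewrite flatmx0.
have ordg : #[g]%g = (p ^ e)%N by rewrite -cardC defC.
rewrite subr1_expn_pchar ?pchar_lalg // -ordg -repr_mx_expg.
by rewrite expg_order repr_mx1 subrr.
Qed.

Lemma mx_indecomposable_kermx_rank d (rG : mx_representation F C d) U :
  mx_indecomposable rG U -> \rank (U :&: kermx (rG g - 1%:M)) = 1%N.
Proof.
case=> modU nzU indU; have [e Ne] := repr_mx_sub1_nilpotent rG.
have sUN : (U *m (rG g - 1%:M) <= U)%MS by rewrite -mxmodule_cycleE.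
apply/eqP; rewrite eqn_leq lt0n mxrank_eq0 (stable_capmx_kermx_neq0 Ne) // andbT.
apply: indecomposable_kermx_rank Ne sUN _ => U1 U2.
by rewrite -!mxmodule_cycleE; apply: indU.
Qed.

Lemma indec_decomposition_kermx_rank d (rG : mx_representation F C d) r :
  indec_decomposition rG r -> r = \rank (kermx (rG g - 1%:M)).
Proof.
case=> W [indW defW dW]; have [e Ne] := repr_mx_sub1_nilpotent rG.
have sWN i : (W i *m (rG g - 1%:M) <= W i)%MS.
  by rewrite -mxmodule_cycleE; case: (indW i).
rewrite -(mxdirect_stable_kermx_rank defW dW sWN).
by rewrite (eq_bigr _ (fun i _ => mx_indecomposable_kermx_rank (indW i))) sum1_card card_ord.
Qed.

End CyclicPGroupRepr.

Theorem lemma3 (F : closedFieldType) (p : nat) (gT : finGroupType)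
    (C : {group gT}) (charFp : p \in [pchar F]) (cycC : cyclic C)
    (pC : (p.-group C)%g) (ntC : C :!=: 1%g)
    (m n : nat) (rP : mx_representation F C m) (rQ : mx_representation F C n)
    (r s : nat) :
  indec_decomposition (tens_repr rP rQ) r ->
  indec_decomposition (tens_repr rP (@triv_repr F gT C n)) s ->
  (r <= s)%N.
Proof.
move=> decPQ decPI; have [g defC] := cyclicP cycC.
rewrite (indec_decomposition_kermx_rank defC charFp pC decPQ).
rewrite (indec_decomposition_kermx_rank defC charFp pC decPI).
rewrite !mxrank_ker leq_sub2l //= mxrank_tens_sub1C -{1}(tensmx11 F n m).
rewrite -tensmxBr mxrank_tens1mx (mxrank_tens_sub1C (rP g)).
have [e Qe] := repr_mx_sub1_nilpotent defC charFp pC rQ.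
exact: unipotent_tens_rank Qe.
Qed.
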